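(* Let $m\ge 2$, fix $i_1,\dots,i_m\in\{1,\dots,n\}$, and let $a,r,s,t\ge0$ be integers with $2a+r+(s+2)+t=m$. Then $$[\eta^ax^r\gamma^{s+2}\partial^t;i_1,\dots,i_m]=2(a+1)\,[\eta^{a+1}x^r\gamma^s\partial^t;i_1,\dots,i_m].$$
   Context: Fix $n\ge1$ and an invertible complex matrix $\eta=(\eta^{ij})$ with $\eta^{ij}=\eta^{ji}$. $W(2n|n)$ is the associative superalgebra generated by even $x^1,\dots,x^n,\partial_1,\dots,\partial_n$ and odd $\gamma^1,\dots,\gamma^n$ with relations $x^ix^j=x^jx^i$, $\partial_i\partial_j=\partial_j\partial_i$, $\partial_ix^j-x^j\partial_i=\delta_i^j$, $\gamma^i$ commuting with all $x^j,\partial_j$, $\gamma^i\gamma^j+\gamma^j\gamma^i=2\eta^{ij}$; $\partial^i:=\eta^{ij}\partial_j$ (summed). Bracket symbol: for integers $a,r,s,t\ge0$ with $2a+r+s+t=m$ and indices $i_1,\dots,i_m$, for $\sigma\in S_m$ put $T_\sigma:=\prod_{k=0}^{a-1}\eta^{i_{\sigma(2k+1)}i_{\sigma(2k+2)}}\cdot x^{i_{\sigma(2a+1)}}\cdots x^{i_{\sigma(2a+r)}}\cdot\gamma^{i_{\sigma(2a+r+1)}}\cdots\gamma^{i_{\sigma(2a+r+s)}}\cdot\partial^{i_{\sigma(2a+r+s+1)}}\cdots\partial^{i_{\sigma(m)}}$, and $[\eta^ax^r\gamma^s\partial^t;i_1,\dots,i_m]:=\frac{1}{2^a\,a!\,r!\,t!}\sum_{\sigma\in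 S_m}T_\sigma$; equivalently, the sum of $T_\sigma$ over one representative of each orbit of orderings under swapping the two indices within an $\eta$-pair, permuting the $\eta$-pairs, permuting the $x$-positions and permuting the $\partial$-positions. Factors with exponent $0$ are omitted, and the symbol is defined to be $0$ if the exponent of $x$ is negative. *)

From mathcomp Require Import all_boot all_algebra all_fingroup.
From mathcomp Require Import complex Rstruct.
Set Implicit Arguments. Unset Strict Implicit. Unset Printing Implicit Defensive.
Import GRing.Theory.
Local Open Scope ring_scope.

Definition CC : fieldType := complex Rdefinitions.R.

(* Generators of W(2n|n) inside a C-algebra A (indices 0..n-1 instead of 1..n):
   x i = x^i, d i = partial_i, g i = gamma^i.  The defining relations: *)
Definition weyl_clifford_rels (n : nat) (A : algType CC) (eta : 'M[CC]_n)
    (x d g : 'I_n -> A) : Prop :=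
  (forall i j, x i * x j = x j * x i) /\
  (forall i j, d i * d j = d j * d i) /\
  (forall i j, d i * x j - x j * d i = (i == j)%:R) /\
  (forall i j, g i * x j = x j * g i) /\
  (forall i j, g i * d j = d j * g i) /\
  (forall i j, g i * g j + g j * g i = (2%:R * eta i j) *: 1).

Definition dup (n : nat) (A : algType CC) (eta : 'M[CC]_n) (d : 'I_n -> A)
    (i : 'I_n) : A :=
  \sum_(j < n) eta i j *: d j.

Definition Tsigma (n m : nat) (A : algType CC) (eta : 'M[CC]_n)
    (x d g : 'I_n -> A) (a r s t : nat) (idx : 'I_m -> 'I_n)
    (sigma : 'S_m) : A :=
  let j (k : 'I_m) := idx (sigma k) in
  (* eta-pairs occupy positions (2k, 2k+1), k < a *)
  (\prod_(k : 'I_m | (k < 2 * a)%N && ~~ odd k)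
      \prod_(k' : 'I_m | val k' == (val k).+1) eta (j k) (j k')) *:
  ((\prod_(k : 'I_m | (2 * a <= k < 2 * a + r)%N) x (j k)) *
   (\prod_(k : 'I_m | (2 * a + r <= k < 2 * a + r + s)%N) g (j k)) *
   (\prod_(k : 'I_m | (2 * a + r + s <= k < 2 * a + r + s + t)%N)
      dup eta d (j k))).

(* [eta^a x^r gamma^s partial^t; i_1,...,i_m]
   := 1/(2^a a! r! t!) * sum_{sigma in S_m} T_sigma  (meaningful when 2a+r+s+t = m) *)
Definition bracket (n m : nat) (A : algType CC) (eta : 'M[CC]_n)
    (x d g : 'I_n -> A) (a r s t : nat) (idx : 'I_m -> 'I_n) : A :=
  ((2 ^ a * a`! * r`! * t`!)%:R : CC)^-1 *:
    \sum_(sigma : 'S_m) Tsigma eta x d g a r s t idx sigma.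

From mathcomp Require Import all_boot all_algebra all_fingroup.
From mathcomp Require Import complex Rstruct.
From mathcomp Require Import zify ring.
Import GRing.Theory.
Local Open Scope ring_scope.

(* Pair every ordering sigma with tau * sigma, where tau swaps the first two
   gamma-positions p = 2a+r and p+1.  Since gamma^i gamma^j + gamma^j gamma^i
   = 2 eta^{ij}, the two terms add up to 2 eta^{j_p j_(p+1)} times the word with
   those two gammas removed, and this is twice the term of the (a+1)-bracket
   for the ordering that moves the two indices into a new eta-pair in front of
   the x's.  Summing over S_m gives sum T = sum T', and the constant comes from
   2^(a+1) (a+1)! = 2(a+1) 2^a a!. *)

Lemma big_ord_nat_cond {R : Type} {idx : R} {op : Monoid.law idx}
    (M lo hi : nat) (F : nat -> R) :
  (hi <= M)%N ->
  \big[op/idx]_(k : 'I_M | (lo <= k < hi)%N) F k = \big[op/idx]_(lo <= i < hi) F i.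
Proof.
move=> hiM; rewrite -(big_mkord (fun k => (lo <= k < hi)%N) F).
rewrite (big_nat_widen lo hi M) // (big_nat_widenl lo 0) //.
by apply: eq_bigl => i; rewrite andbC.
Qed.

Lemma big_nat_even {R : Type} {idx : R} {op : Monoid.law idx} (a : nat) (F : nat -> R) :
  \big[op/idx]_(0 <= i < 2 * a | ~~ odd i) F i = \big[op/idx]_(i < a) F (2 * i)%N.
Proof.
elim: a => [|a IH]; first by rewrite big_geq // big_ord0.
rewrite big_ord_recr -IH !(big_mkcond (fun i => ~~ odd i)) /=.
have -> : (2 * a.+1 = (2 * a).+2)%N by lia.
by rewrite !big_nat_recr //= oddM /= Monoid.mulm1.
Qed.

Section Words.

Context {n : nat} {eta : 'M[CC]_n} {A : algType CC} {x d g : 'I_n -> A}.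

Definition Tword (F : nat -> 'I_n) (a r s t : nat) : A :=
  (\prod_(i < a) eta (F (2 * i)%N) (F (2 * i).+1)) *:
  (\prod_(2 * a <= i < 2 * a + r) x (F i) *
   \prod_(2 * a + r <= i < 2 * a + r + s) g (F i) *
   \prod_(2 * a + r + s <= i < 2 * a + r + s + t) dup eta d (F i)).

Lemma eq_Tword (F F' : nat -> 'I_n) (a r s t : nat) :
  (forall i, (i < 2 * a + r + s + t)%N -> F i = F' i) ->
  Tword F a r s t = Tword F' a r s t.
Proof.
move=> eqF; rewrite /Tword; congr (_ *: (_ * _ * _)).
- by apply: eq_bigr => i _; rewrite !eqF //; have := ltn_ord i; lia.
- by apply: eq_big_nat => i ?; rewrite eqF //; lia.
- by apply: eq_big_nat => i ?; rewrite eqF //; lia.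
- by apply: eq_big_nat => i ?; rewrite eqF //; lia.
Qed.

Lemma Tsigma_Tword (M : nat) (idx : 'I_M.+1 -> 'I_n) (a r s t : nat)
    (sigma : 'S_M.+1) :
  (2 * a + r + s + t <= M.+1)%N ->
  Tsigma eta x d g a r s t idx sigma =
  Tword (fun i => idx (sigma (inord i))) a r s t.
Proof.
move=> bound; rewrite /Tsigma /Tword.
set F := fun i => idx (sigma (inord i)).
have bigF (h : 'I_n -> A) lo hi : (hi <= M.+1)%N ->
    \prod_(k : 'I_M.+1 | (lo <= k < hi)%N) h (idx (sigma k)) =
    \prod_(lo <= i < hi) h (F i).
  move=> hiM; rewrite -(big_ord_nat_cond _ lo hi (fun i => h (F i)) hiM).
  by apply: eq_bigr => k _; rewrite /F inord_val.
rewrite !bigF; try lia; congr (_ *: _).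
rewrite -(big_nat_even a (fun k => eta (F k) (F k.+1))).
rewrite (big_nat_widen 0 (2 * a) M.+1); last by lia.
rewrite big_mkord; apply: eq_big => [k | k /andP [k_lt k_even]].
  by rewrite andbC.
have k1_lt : (k.+1 < M.+1)%N.
  have := odd_double_half k; rewrite (negbTE k_even) -mul2n; lia.
rewrite (big_pred1 (inord k.+1)) => [|k'].
  by rewrite /F inord_val.
by rewrite /= -val_eqE /= inordK.
Qed.

Lemma Tsigma_mulg_Tword {M : nat} {idx : 'I_M.+1 -> 'I_n} {a r s t : nat}
    {rho sigma : 'S_M.+1} {f : nat -> nat} :
  (forall i, (i < M.+1)%N -> rho (inord i) = inord (f i)) ->
  (2 * a + r + s + t <= M.+1)%N ->
  Tsigma eta x d g a r s t idx (rho * sigma)%g =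
  Tword (fun i => idx (sigma (inord (f i)))) a r s t.
Proof.
move=> rho_f bound; rewrite Tsigma_Tword //.
by apply: eq_Tword => i lt_i; rewrite permM rho_f //; lia.
Qed.

(* [c] stands in place of the first two gamma-factors of [Tword F a r s.+2 t]. *)
Definition Tword_insert (F : nat -> 'I_n) (a r s t : nat) (c : A) : A :=
  (\prod_(i < a) eta (F (2 * i)%N) (F (2 * i).+1)) *:
  (\prod_(2 * a <= i < 2 * a + r) x (F i) *
   (c * \prod_((2 * a + r).+2 <= i < 2 * a + r + s.+2) g (F i)) *
   \prod_(2 * a + r + s.+2 <= i < 2 * a + r + s.+2 + t) dup eta d (F i)).

Lemma Tword_insertD (F : nat -> 'I_n) (a r s t : nat) (c1 c2 : A) :
  Tword_insert F a r s t (c1 + c2) =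
  Tword_insert F a r s t c1 + Tword_insert F a r s t c2.
Proof. by rewrite /Tword_insert -scalerDr -mulrDl -mulrDr -mulrDl. Qed.

Lemma Tword_insertZ (F : nat -> 'I_n) (a r s t : nat) (k : CC) :
  Tword_insert F a r s t (k *: 1) = k *: Tword_insert F a r s t 1.
Proof. by rewrite /Tword_insert -scalerAl -scalerAr -scalerAl scalerA mulrC -scalerA. Qed.

Lemma eq_Tword_insert (F F' : nat -> 'I_n) (a r s t : nat) (c : A) :
  (forall i, (i < 2 * a + r + s.+2 + t)%N ->
     i != (2 * a + r)%N -> i != (2 * a + r).+1 -> F i = F' i) ->
  Tword_insert F a r s t c = Tword_insert F' a r s t c.
Proof.
move=> eqF; rewrite /Tword_insert; congr (_ *: (_ * (_ * _) * _)).
- by apply: eq_bigr => i _; rewrite !eqF //; have := ltn_ord i; lia.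
- by apply: eq_big_nat => i ?; rewrite eqF //; lia.
- by apply: eq_big_nat => i ?; rewrite eqF //; lia.
- by apply: eq_big_nat => i ?; rewrite eqF //; lia.
Qed.

Lemma Tword_gamma_pair (F : nat -> 'I_n) (a r s t : nat) :
  Tword F a r s.+2 t =
  Tword_insert F a r s t (g (F (2 * a + r)%N) * g (F (2 * a + r).+1)).
Proof.
rewrite /Tword /Tword_insert (big_ltn (m := (2 * a + r)%N)); last lia.
by rewrite (big_ltn (m := (2 * a + r).+1)) ?mulrA //; lia.
Qed.

Definition swap_next (p i : nat) : nat :=
  if i == p then p.+1 else if i == p.+1 then p else i.

(* Position i of the (a+1)-word reads position [contract_pos a r i] of the
   a-word: the new eta-pair at 2a, 2a+1 takes the first two gammas at
   p = 2a+r, p+1, and the x-block moves two places to the right. *)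
Definition contract_pos (a r i : nat) : nat :=
  if (i < 2 * a)%N then i else if i == (2 * a)%N then (2 * a + r)%N
  else if i == (2 * a).+1 then (2 * a + r).+1
  else if (i < (2 * a + r).+2)%N then (i - 2)%N else i.

Definition contract_pos_inv (a r i : nat) : nat :=
  if (i < 2 * a)%N then i else if i == (2 * a + r)%N then (2 * a)%N
  else if i == (2 * a + r).+1 then (2 * a).+1
  else if (i < (2 * a + r).+2)%N then (i + 2)%N else i.

Ltac case_pos := rewrite /swap_next /contract_pos /contract_pos_inv;
  repeat (case: ifP => /= ?); lia.

Lemma contract_posK (a r : nat) : cancel (contract_pos a r) (contract_pos_inv a r).
Proof. by move=> i; rewrite /contract_pos; repeat (case: ifP => /= ?); case_pos. Qed.

Lemma contract_pos_lt (a r M i : nat) :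
  ((2 * a + r).+2 <= M)%N -> (i < M)%N -> (contract_pos a r i < M)%N.
Proof. move=> *; case_pos. Qed.

Lemma Tword_contract (F : nat -> 'I_n) (a r s t : nat) :
  Tword (fun i => F (contract_pos a r i)) a.+1 r s t =
  eta (F (2 * a + r)%N) (F (2 * a + r).+1) *: Tword_insert F a r s t 1.
Proof.
have pos_lt i : (i < 2 * a)%N -> contract_pos a r i = i by move=> ?; case_pos.
have pos_x i : (2 * a + 2 <= i < (2 * a + r).+2)%N -> contract_pos a r i = (i - 2)%N.
  by move=> ?; case_pos.
have pos_hi i : ((2 * a + r).+2 <= i)%N -> contract_pos a r i = i by move=> ?; case_pos.
have pos_2a : contract_pos a r (2 * a) = (2 * a + r)%N by case_pos.
have pos_2a1 : contract_pos a r (2 * a).+1 = (2 * a + r).+1 by case_pos.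
rewrite /Tword /Tword_insert mul1r big_ord_recr /= pos_2a pos_2a1 scalerA mulrC.
have -> : (2 * a.+1 = 2 * a + 2)%N by lia.
have -> : (2 * a + 2 + r = (2 * a + r).+2)%N by lia.
have -> : ((2 * a + r).+2 + s = 2 * a + r + s.+2)%N by lia.
congr (_ * _ *: (_ * _ * _)).
- by apply: eq_bigr => i _; rewrite !pos_lt //; have := ltn_ord i; lia.
- rewrite big_addn !subSS subn0.
  by apply: eq_big_nat => i ?; rewrite pos_x ?addnK //; lia.
- by apply: eq_big_nat => i ?; rewrite pos_hi //; lia.
- by apply: eq_big_nat => i ?; rewrite pos_hi //; lia.
Qed.

Hypothesis g_anticomm : forall i j, g i * g j + g j * g i = (2%:R * eta i j) *: 1.

Lemma Tword_swap_nextD (F : nat -> 'I_n) (a r s t : nat) :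
  Tword F a r s.+2 t + Tword (fun i => F (swap_next (2 * a + r) i)) a r s.+2 t =
  2%:R *: Tword (fun i => F (contract_pos a r i)) a.+1 r s t.
Proof.
set p := (2 * a + r)%N.
rewrite !Tword_gamma_pair Tword_contract scalerA -Tword_insertZ -g_anticomm.
have swap_p : swap_next p p = p.+1 by case_pos.
have swap_p1 : swap_next p p.+1 = p by case_pos.
rewrite swap_p swap_p1 Tword_insertD; congr (_ + _).
by apply: eq_Tword_insert => i _ ne_p ne_p1; rewrite /swap_next (negbTE ne_p) (negbTE ne_p1).
Qed.

Lemma sum_Tsigma_contract (M : nat) (idx : 'I_M.+1 -> 'I_n) (a r s t : nat) :
  (2 * a + r + s.+2 + t <= M.+1)%N ->
  \sum_(sigma : 'S_M.+1) Tsigma eta x d g a r s.+2 t idx sigma =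
  \sum_(sigma : 'S_M.+1) Tsigma eta x d g a.+1 r s t idx sigma.
Proof.
move=> bound; set p := (2 * a + r)%N.
have gammas_lt : ((2 * a + r).+2 <= M.+1)%N by lia.
have contract_inj : injective (fun k : 'I_M.+1 => inord (contract_pos a r k) : 'I_M.+1).
  move=> k1 k2 /(congr1 val); rewrite /= !inordK ?contract_pos_lt // => eq12.
  by apply: ord_inj; rewrite -(contract_posK a r k1) eq12 contract_posK.
pose pi : 'S_M.+1 := perm contract_inj.
pose tau : 'S_M.+1 := tperm (inord p) (inord p.+1).
pose T := Tsigma eta x d g a r s.+2 t idx.
pose T' := Tsigma eta x d g a.+1 r s t idx.
have tau_swap i : (i < M.+1)%N -> tau (inord i) = inord (swap_next p i).
  move=> lt_i; rewrite /tau /swap_next.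
  case: eqP => [->|ne_p]; first by rewrite tpermL.
  case: eqP => [->|ne_p1]; first by rewrite tpermR.
  by rewrite tpermD //; apply/eqP => /(congr1 val); rewrite /= !inordK //; lia.
have pi_contract i : (i < M.+1)%N -> pi (inord i) = inord (contract_pos a r i).
  by move=> lt_i; rewrite permE inordK.
have pair_sum sigma : T sigma + T (tau * sigma)%g = 2%:R *: T' (pi * sigma)%g.
  rewrite /T /T' Tsigma_Tword // (Tsigma_mulg_Tword tau_swap) //.
  by rewrite (Tsigma_mulg_Tword pi_contract) ?Tword_swap_nextD //; lia.
have two_neq0 : (2%:R : CC) != 0 by rewrite Num.Theory.pnatr_eq0.
apply: (scalerI two_neq0).
rewrite [in LHS]scaler_nat mulr2n {2}(reindex_inj (mulgI tau)) -big_split.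
rewrite [in RHS](reindex_inj (mulgI pi)) scaler_sumr.
by apply: eq_bigr => sigma _; apply: pair_sum.
Qed.

End Words.

Theorem lemma5p1 (n : nat) (eta : 'M[CC]_n)
    (eta_sym : eta^T = eta) (eta_inv : eta \in unitmx)
    (A : algType CC) (x d g : 'I_n -> A)
    (rels : weyl_clifford_rels eta x d g)
    (m : nat) (hm2 : (2 <= m)%N) (idx : 'I_m -> 'I_n)
    (a r s t : nat) (hm : (2 * a + r + s.+2 + t)%N = m) :
  bracket eta x d g a r s.+2 t idx
  = ((2 * a.+1)%N%:R : CC) *: bracket eta x d g a.+1 r s t idx.
Proof.
have [_ [_ [_ [_ [_ g_anticomm]]]]] := rels.
case: m hm2 idx hm => [|M] // _ idx hm.
rewrite /bracket (sum_Tsigma_contract g_anticomm) ?hm // scalerA.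
congr (_ *: _).
have -> : (2 ^ a.+1 * a.+1`! * r`! * t`! = 2 * a.+1 * (2 ^ a * a`! * r`! * t`!))%N.
  by rewrite expnS factS; ring.
have two_a1_neq0 : ((2 * a.+1)%N%:R : CC) != 0 by rewrite Num.Theory.pnatr_eq0.
by rewrite [X in _ / X]natrM invfM mulrA mulfV // mul1r.
Qed.
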